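(* Let $\varphi:\mathbb{R}^n\times\mathbb{R}^m\to\mathbb{R}\cup\{+\infty\}$ be a closed proper convex function and define $L(x,\lambda)=\inf_u\{\varphi(x,u)-\langle\lambda,u\rangle\}$. Let $H\in\mathbb{R}^{m\times m}$ be symmetric positive definite, let $(a_k),(c_k)$ be positive and $(b_k)$ nonnegative real sequences, let $\lambda_0\in\mathbb{R}^m$, $z_0=\lambda_0$, and for $k\geqslant0$ let $$\tilde\lambda_{k+1}=\frac{1}{b_k+1}z_k+\frac{b_k}{b_k+1}\lambda_k,$$ $$(x_{k+1},u_{k+1})\in\arg\min_{x,u}\Big\{\varphi(x,u)-\langle\tilde\lambda_{k+1},u\rangle+\frac{c_k}{2(b_k+1)}\|u\|_H^2\Big\},$$ $$\lambda_{k+1}=\tilde\lambda_{k+1}-\frac{c_k}{b_k+1}Hu_{k+1},\qquad z_{k+1}=z_k+\frac{a_k}{c_k}(b_k+1)H(\lambda_{k+1}-\tilde\lambda_{k+1}),$$ where the minimizers are assumed to exist. Then for every $k\geqslant1$, $$\min_xL(x,\lambda_k)=L(x_k,\lambda_k)=\varphi(x_k,u_k)-\langle\lambda_k,u_k\rangle.$$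
   Context: $\|u\|_H^2=u^{\mathrm T}Hu$. *)

From HB Require Import structures.
From mathcomp Require Import all_boot all_order all_algebra.
From mathcomp Require Import all_classical all_reals all_analysis.
Set Implicit Arguments. Unset Strict Implicit. Unset Printing Implicit Defensive.
Import Order.TTheory GRing.Theory Num.Theory numFieldTopology.Exports numFieldNormedType.Exports.
Local Open Scope ring_scope.
Definition dotv (R : realType) m (v w : 'cV[R]_m) : R := (v^T *m w) 0 0.
Definition Hnorm2 (R : realType) m (H : 'M[R]_m) (u : 'cV[R]_m) : R :=
  (u^T *m H *m u) 0 0.

Definition sym_posdef (R : realType) m (H : 'M[R]_m) : Prop :=
  H^T = H /\ forall v : 'cV[R]_m, v != 0 -> (0 < Hnorm2 H v)%R.

Local Open Scope ereal_scope.

Definition proper_fun (R : realType) n m (phi : 'cV[R]_n -> 'cV[R]_m -> \bar R) :=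
  (forall x u, phi x u != -oo) /\ (exists x u, phi x u < +oo).

Definition convex_fun (R : realType) n m (phi : 'cV[R]_n -> 'cV[R]_m -> \bar R) :=
  forall x1 u1 x2 u2 (t : R), (0 < t < 1)%R ->
    phi (t *: x1 + (1 - t) *: x2)%R (t *: u1 + (1 - t) *: u2)%R
      <= t%:E * phi x1 u1 + (1 - t)%:E * phi x2 u2.

Definition closed_fun (R : realType) n m (phi : 'cV[R]_n -> 'cV[R]_m -> \bar R) :=
  lower_semicontinuous (fun p : 'cV[R]_n * 'cV[R]_m => phi p.1 p.2).

Definition Lag (R : realType) n m (phi : 'cV[R]_n -> 'cV[R]_m -> \bar R)
  (x : 'cV[R]_n) (lam : 'cV[R]_m) : \bar R :=
  ereal_inf [set phi x u - (dotv lam u)%:E | u in [set: 'cV[R]_m]].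

(* The proximal objective is phi(x,u) - <lamt,u> + alpha ||u||_H^2 with
   alpha = c_k / (2 (b_k + 1)), and the update of lambda is exactly
   lambda_{k+1} = lamt - 2 alpha H u_{k+1}, i.e. minus the gradient in u of the
   smooth part at u_{k+1}.  Comparing the minimizer with the points of the
   segment towards any (x,u), using convexity of phi and letting the step t
   tend to 0 (the quadratic term is O(t^2)), shows that (x_{k+1}, u_{k+1})
   minimizes phi(x,u) - <lambda_{k+1},u> jointly in (x,u); both equalities
   follow. *)

From HB Require Import structures.
From mathcomp Require Import all_boot all_order all_algebra.
From mathcomp Require Import all_classical all_reals all_analysis.
From mathcomp Require Import ring lra.
Import Order.TTheory GRing.Theory Num.Theory.
Set Implicit Arguments. Unset Strict Implicit. Unset Printing Implicit Defensive.
Local Open Scope ring_scope.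

Lemma ler_of_le_addr_in01 (R : realFieldType) (x y k : R) :
  (forall t, 0 < t < 1 -> x <= y + t * k) -> x <= y.
Proof.
move=> le_xy; apply/ler_addgt0Pr => e e_gt0.
have D_gt0 : 0 < e + `|k| + 1 by rewrite -addrA ltr_pwDl // ltr_wpDl.
pose t := e / (e + `|k| + 1).
have t01 : 0 < t < 1.
  by rewrite divr_gt0 //= ltr_pdivrMr // mul1r -addrA ltr_pwDr // ltr_wpDl.
apply: le_trans (le_xy t t01) _; rewrite lerD2l.
have t_gt0 : 0 < t by case/andP: t01.
apply: le_trans (ler_wpM2l (ltW t_gt0) (ler_norm k)) _.
by rewrite /t mulrAC ler_pdivrMr // ler_pM2l //; lra.
Qed.

Section Dotv.
Variables (R : realType) (m : nat).
Implicit Types (v w : 'cV[R]_m) (A H : 'M[R]_m).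

Lemma dotvC v w : dotv v w = dotv w v.
Proof.
by rewrite /dotv -[in LHS](trmxK (v^T *m w)) [LHS]mxE trmx_mul !trmxK.
Qed.

Lemma dotvDr v w1 w2 : dotv v (w1 + w2) = dotv v w1 + dotv v w2.
Proof. by rewrite /dotv mulmxDr mxE. Qed.

Lemma dotvZr v w t : dotv v (t *: w) = t * dotv v w.
Proof. by rewrite /dotv -scalemxAr mxE. Qed.

Lemma dotvBr v w1 w2 : dotv v (w1 - w2) = dotv v w1 - dotv v w2.
Proof. by rewrite /dotv mulmxBr !mxE. Qed.

Lemma dotvDl v1 v2 w : dotv (v1 + v2) w = dotv v1 w + dotv v2 w.
Proof. by rewrite dotvC dotvDr !(dotvC w). Qed.

Lemma dotvBl v1 v2 w : dotv (v1 - v2) w = dotv v1 w - dotv v2 w.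
Proof. by rewrite dotvC dotvBr !(dotvC w). Qed.

Lemma dotvZl v w t : dotv (t *: v) w = t * dotv v w.
Proof. by rewrite dotvC dotvZr dotvC. Qed.

Lemma dotv_mulmx v A w : dotv v (A *m w) = dotv (A^T *m v) w.
Proof. by rewrite /dotv trmx_mul trmxK mulmxA. Qed.

Lemma Hnorm2E H v : Hnorm2 H v = dotv v (H *m v).
Proof. by rewrite /Hnorm2 /dotv mulmxA. Qed.

Lemma Hnorm2D H v w : H^T = H ->
  Hnorm2 H (v + w) = Hnorm2 H v + 2 * dotv (H *m v) w + Hnorm2 H w.
Proof.
move=> HT; rewrite !Hnorm2E mulmxDr !(dotvDl, dotvDr).
by rewrite [dotv v (H *m w)]dotv_mulmx HT [dotv w (H *m v)]dotvC; ring.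
Qed.

Lemma Hnorm2Z H v t : Hnorm2 H (t *: v) = t ^+ 2 * Hnorm2 H v.
Proof. by rewrite !Hnorm2E -scalemxAr dotvZr dotvC dotvZr dotvC mulrA expr2. Qed.

End Dotv.

Section ConvexArgmin.
Local Open Scope ereal_scope.
Variables (R : realType) (n m : nat) (phi : 'cV[R]_n -> 'cV[R]_m -> \bar R).
Hypothesis phi_convex : convex_fun phi.
Hypothesis phi_neqNy : forall x u, phi x u != -oo.

Lemma convex_fun_segment_fin x1 u1 x2 u2 (r1 r2 t : R) :
  phi x1 u1 = r1%:E -> phi x2 u2 = r2%:E -> (0 < t < 1)%R ->
  exists2 s : R, phi (t *: x1 + (1 - t) *: x2) (t *: u1 + (1 - t) *: u2) = s%:E
    & (s <= t * r1 + (1 - t) * r2)%R.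
Proof.
move=> phi1 phi2 t01; have := phi_convex x1 u1 x2 u2 t01.
rewrite phi1 phi2 -!EFinM -EFinD.
have := phi_neqNy (t *: x1 + (1 - t) *: x2) (t *: u1 + (1 - t) *: u2).
by case: (phi _ _) => [s | |] //= _; exists s.
Qed.

Lemma argmin_quadratic_linearize (lamt : 'cV[R]_m) (H : 'M[R]_m) (alpha : R) x1 u1 :
  H^T = H ->
  (forall x u, phi x1 u1 - (dotv lamt u1)%:E + (alpha * Hnorm2 H u1)%:E
               <= phi x u - (dotv lamt u)%:E + (alpha * Hnorm2 H u)%:E) ->
  let lam := (lamt - (2 * alpha) *: (H *m u1))%R in
  forall x u, phi x1 u1 - (dotv lam u1)%:E <= phi x u - (dotv lam u)%:E.
Proof.
move=> HT argmin lam x u.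
case phixu: (phi x u) => [r | |]; last 2 first.
- by rewrite /= leey.
- by have := phi_neqNy x u; rewrite phixu.
have [p phi1] : exists p, phi x1 u1 = p%:E.
  have := argmin x u; rewrite phixu.
  by have := phi_neqNy x1 u1; case: (phi x1 u1) => [p | |] // _ _; exists p.
rewrite phi1 -!EFinB lee_fin.
apply: (@ler_of_le_addr_in01 _ _ _ (alpha * Hnorm2 H (u - u1))) => t t01.
have [s phit les] := convex_fun_segment_fin phixu phi1 t01.
have := argmin (t *: x + (1 - t) *: x1)%R (t *: u + (1 - t) *: u1)%R.
rewrite phi1 phit -!EFinB -!EFinD lee_fin.
have -> : (t *: u + (1 - t) *: u1 = u1 + t *: (u - u1))%R.
  by rewrite scalerBl scale1r scalerBr addrCA addrA.
rewrite Hnorm2D // Hnorm2Z !dotvDr !dotvZr !dotvBr /lam !dotvBl !dotvZl.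
move=> min_t; case/andP: t01 => t_gt0 _.
by rewrite -(ler_pM2l t_gt0); lra.
Qed.

End ConvexArgmin.

Section LagrangianArgmin.
Local Open Scope ereal_scope.
Local Open Scope classical_set_scope.
Variables (R : realType) (n m : nat) (phi : 'cV[R]_n -> 'cV[R]_m -> \bar R).
Variables (lam : 'cV[R]_m) (x1 : 'cV[R]_n) (u1 : 'cV[R]_m).
Hypothesis argmin :
  forall x u, phi x1 u1 - (dotv lam u1)%:E <= phi x u - (dotv lam u)%:E.

Lemma Lag_ge_argmin x : phi x1 u1 - (dotv lam u1)%:E <= Lag phi x lam.
Proof. by apply: le_ereal_inf_tmp => _ [u _ <-]; exact: argmin. Qed.

Lemma Lag_argmin : Lag phi x1 lam = phi x1 u1 - (dotv lam u1)%:E.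
Proof.
apply/eqP; rewrite eq_le Lag_ge_argmin andbT.
by apply: ge_ereal_inf; exists (phi x1 u1 - (dotv lam u1)%:E) => //; exists u1.
Qed.

Lemma inf_Lag_argmin :
  ereal_inf [set Lag phi x lam | x in [set: 'cV[R]_n]] = Lag phi x1 lam.
Proof.
apply/eqP; rewrite eq_le; apply/andP; split.
  by apply: ge_ereal_inf; exists (Lag phi x1 lam) => //; exists x1.
by rewrite Lag_argmin; apply: le_ereal_inf_tmp => _ [x _ <-]; exact: Lag_ge_argmin.
Qed.

End LagrangianArgmin.

Local Open Scope classical_set_scope.

Theorem lemma2 (R : realType) (n m : nat)
  (phi : 'cV[R]_n -> 'cV[R]_m -> \bar R)
  (H : 'M[R]_m) (a b c : nat -> R) (lam0 : 'cV[R]_m)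
  (x : nat -> 'cV[R]_n) (u lam lamt z : nat -> 'cV[R]_m) :
  closed_fun phi -> proper_fun phi -> convex_fun phi ->
  sym_posdef H ->
  (forall k, 0 < a k) -> (forall k, 0 < c k) -> (forall k, 0 <= b k) ->
  lam 0%N = lam0 -> z 0%N = lam0 ->
  (forall k, lamt k.+1 =
     (b k + 1)^-1 *: z k + (b k / (b k + 1)) *: lam k) ->
  (forall k, forall (x' : 'cV[R]_n) (u' : 'cV[R]_m),
     (phi (x k.+1) (u k.+1) - (dotv (lamt k.+1) (u k.+1))%:E
        + (c k / (2 * (b k + 1)) * Hnorm2 H (u k.+1))%:E
      <= phi x' u' - (dotv (lamt k.+1) u')%:E
        + (c k / (2 * (b k + 1)) * Hnorm2 H u')%:E)%E) ->
  (forall k, lam k.+1 = lamt k.+1 - (c k / (b k + 1)) *: (H *m u k.+1)) ->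
  (forall k, z k.+1 =
     z k + (a k / c k * (b k + 1)) *: (H *m (lam k.+1 - lamt k.+1))) ->
  forall k, (1 <= k)%N ->
    ereal_inf [set Lag phi x' (lam k) | x' in [set: 'cV[R]_n]]
      = Lag phi (x k) (lam k) /\
    Lag phi (x k) (lam k) = (phi (x k) (u k) - (dotv (lam k) (u k))%:E)%E.
Proof.
move=> _ [phi_neqNy _] phi_convex [HT _] _ _ _ _ _ _ prox_step lam_step _ [//|k] _.
have lam_grad : lam k.+1 = lamt k.+1 - (2 * (c k / (2 * (b k + 1)))) *: (H *m u k.+1).
  by rewrite lam_step invfM mulrCA mulVKf ?pnatr_eq0.
have argmin := argmin_quadratic_linearize phi_convex phi_neqNy HT (prox_step k).
rewrite -lam_grad in argmin.
by split; [exact: inf_Lag_argmin | exact: Lag_argmin].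
Qed.
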